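(* Consider a matched pair study and assume Fisher's null $H_0$ holds. (i) For any $1\le k\le I$ and $\alpha\in(0,1)$, $\{\Gamma_0\in[1,\infty]:\overline p_{\Gamma_0;k}>\alpha\}$ is a $1-\alpha$ confidence set for $\Gamma^\star_{(k)}$, and it equals either $(\hat\Gamma_{(k)},\infty]$ or $[\hat\Gamma_{(k)},\infty]$, where $\hat\Gamma_{(k)}=\inf\{\Gamma_0\ge1:\overline p_{\Gamma_0;k}>\alpha\}$. (ii) For any $\Gamma_0$ and $\alpha\in(0,1)$, $\{I-k:\overline p_{\Gamma_0;k}>\alpha,\ 0\le k\le I\}$ is a $1-\alpha$ confidence set for $I^\star(\Gamma_0)$, and it equals $\{\hat I(\Gamma_0),\hat I(\Gamma_0)+1,\dots,I\}$ with $\hat I(\Gamma_0)=I-\sup\{k:\overline p_{\Gamma_0;k}>\alpha,\ 0\le k\le I\}$.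
   Context: Setting: $I$ matched pairs, potential outcomes fixed, $Z$ (one treated unit per pair) is the only randomness with true mechanism $\mathbb P(Z=z)=\prod_i\prod_j(p^\star_{ij})^{z_{ij}}$, $p^\star_{i1}+p^\star_{i2}=1$; true hidden bias $\Gamma^\star_i=\max_jp^\star_{ij}/\min_kp^\star_{ik}\in[1,\infty]$; $\Gamma^\star_{(k)}$ is its $k$th smallest value, and $I^\star(\Gamma_0)=\#\{i:\Gamma^\star_i>\Gamma_0\}$. Fisher's null $H_0$: $Y_{ij}(1)=Y_{ij}(0)$ for all $i,j$. $T=\sum_i\sum_jZ_{ij}q_{ij}$ with $q_{ij}$ fixed functions of $Y(0)$. Fix an ordering of pairs by nondecreasing $|q_{i1}-q_{i2}|$; $\mathcal I_k$ is the first $k$ pairs. $\overline T(\Gamma_0;k)$ is a sum of independent variables: for $i\in\mathcal I_k$ it equals $\max\{q_{i1},q_{i2}\}$ with probability $\Gamma_0/(1+\Gamma_0)$ and $\min\{q_{i1},q_{i2}\}$ otherwise; for $i\notin\mathcal I_k$ it equals $\max\{q_{i1},q_{i2}\}$ with probability 1. $\overline p_{\Gamma_0;k}=\mathbb P(\overline T(\Gamma_0;k)\ge c)|_{c=T}$ for $1\le k\le I$, and by convention $\overline p_{\Gamma_0;0}=1$. *)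

From HB Require Import structures.
From mathcomp Require Import all_boot all_order all_algebra.
From mathcomp Require Import fingroup perm.
From mathcomp Require Import boolp classical_sets reals constructive_ereal ereal.
Set Implicit Arguments. Unset Strict Implicit. Unset Printing Implicit Defensive.
Import Order.TTheory GRing.Theory Num.Theory.
Local Open Scope ring_scope.

Section Defs.
Variables (R : realType) (I : nat).

(* Assignment: z i = index (in 'I_2) of the treated unit of pair i;
   Z_ij = (z i == j). *)
Definition assignment := {ffun 'I_I -> 'I_2}.

(* True law: P(Z = z) = prod_i prod_j p_ij^{Z_ij} = prod_i p i (z i). *)
Definition probZ (p : 'I_I -> 'I_2 -> R) (z : assignment) : R :=
  \prod_(i < I) p i (z i).

Definition Pr (p : 'I_I -> 'I_2 -> R) (E : pred assignment) : R :=
  \sum_(z : assignment | E z) probZ p z.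

Definition Tstat (q : 'I_I -> 'I_2 -> R) (z : assignment) : R :=
  \sum_(i < I) \sum_(j < 2) (z i == j)%:R * q i j.

Definition gamma_star (p : 'I_I -> 'I_2 -> R) (i : 'I_I) : \bar R :=
  let mx := Num.max (p i 0) (p i 1) in
  let mn := Num.min (p i 0) (p i 1) in
  if mn == 0 then +oo%E else (mx / mn)%:E.

Definition kth_smallest (g : 'I_I -> \bar R) (k : nat) : \bar R :=
  nth +oo%E (sort (fun x y : \bar R => (x <= y)%O) [seq g i | i <- enum 'I_I]) k.-1.

Definition I_star (p : 'I_I -> 'I_2 -> R) (Gamma0 : \bar R) : nat :=
  #|[set i : 'I_I | (Gamma0 < gamma_star p i)%E]|.

Definition theta (Gamma0 : \bar R) : R :=
  match Gamma0 with
  | EFin r => r / (1 + r)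
  | +oo%E => 1
  | -oo%E => 0
  end.

Definition Ik (sigma : {perm 'I_I}) (k : nat) : {set 'I_I} :=
  [set sigma a | a : 'I_I & (a < k)%N].

(* Law of Tbar(Gamma0;k), encoded by w : {ffun 'I_I -> bool};
   w i = true means pair i contributes max{q_i1,q_i2}, false means min. *)
Definition Tbar_weight (sigma : {perm 'I_I}) (Gamma0 : \bar R) (k : nat)
    (w : {ffun 'I_I -> bool}) : R :=
  \prod_(i < I)
     (if i \in Ik sigma k then (if w i then theta Gamma0 else 1 - theta Gamma0)
      else (if w i then 1 else 0)).

Definition Tbar_value (q : 'I_I -> 'I_2 -> R) (w : {ffun 'I_I -> bool}) : R :=
  \sum_(i < I) (if w i then Num.max (q i 0) (q i 1) else Num.min (q i 0) (q i 1)).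

Definition pbar (q : 'I_I -> 'I_2 -> R) (sigma : {perm 'I_I})
    (Gamma0 : \bar R) (k : nat) (c : R) : R :=
  if k == 0%N then 1 else
  \sum_(w : {ffun 'I_I -> bool})
     Tbar_weight sigma Gamma0 k w * (if c <= Tbar_value q w then 1 else 0).

Definition pval (q : 'I_I -> 'I_2 -> R) (sigma : {perm 'I_I}) Gamma0 k (z : assignment) : R :=
  pbar q sigma Gamma0 k (Tstat q z).

Definition CS_gamma q sigma k (alpha : R) (z : assignment) : set (\bar R) :=
  [set g | (1 <= g)%E /\ alpha < pval q sigma g k z].

Definition Gamma_hat q sigma k (alpha : R) (z : assignment) : \bar R :=
  ereal_inf (CS_gamma q sigma k alpha z).

Definition CS_I q sigma (Gamma0 : \bar R) (alpha : R) (z : assignment) : pred nat :=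
  fun n => [exists k : 'I_I.+1, (alpha < pval q sigma Gamma0 k z)%R && (n == I - k)%N].

Definition I_hat q sigma (Gamma0 : \bar R) (alpha : R) (z : assignment) : nat :=
  (I - \max_(k < I.+1 | (alpha < pval q sigma Gamma0 k z)%R) k)%N.

End Defs.

From Pilot Require Import Defs.
From HB Require Import structures.
From mathcomp Require Import all_boot all_order all_algebra.
From mathcomp Require Import fingroup perm.
From mathcomp Require Import boolp classical_sets reals constructive_ereal ereal.
From mathcomp Require Import lra zify.
Import Order.TTheory GRing.Theory Num.Theory.
Local Open Scope ring_scope.

Set Implicit Arguments. Unset Strict Implicit. Unset Printing Implicit Defensive.

(* Under Fisher's null the statistic [T] is a sum of independent two-point
   variables: pair [i] contributes [max q_i] with probability [p_i] (the chance
   that the unit with the larger [q] is treated) and [min q_i] otherwise; the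
   reference statistic [Tbar(Gamma0; k)] is a sum of the same kind.  Such a sum
   becomes stochastically larger when a success probability is raised, and when
   a randomized coordinate is moved onto a pair with a smaller gap
   [max q - min q].  If at least [k] pairs have hidden bias at most [Gamma0],
   then [p_i <= Gamma0 / (1 + Gamma0)] on them, so [T] is stochastically
   dominated by [Tbar(Gamma0; k)] and the tail function of [Tbar] evaluated at
   [T] is a valid p-value.  The parameters [Gamma*_(k)] and [I*(Gamma0)] are
   exactly such that this domination holds.  The shape of the two confidence
   sets follows from [pbar] being nondecreasing in [Gamma0] and nonincreasing
   in [k]. *)

Section BernoulliChoiceSums.
Variables (R : realFieldType) (T : finType).
Implicit Types (pi : T -> R) (M m : T -> R) (w : {ffun T -> bool}) (u : R -> bool).

Definition bern_weight pi w : R := \prod_i (if w i then pi i else 1 - pi i).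

Definition choice_sum M m w : R := \sum_i (if w i then M i else m i).

(* [bern_prob pi M m u] is the probability that [u] holds for the sum of
   independent variables taking value [M i] with probability [pi i] and [m i]
   otherwise. *)
Definition bern_prob pi M m u : R :=
  \sum_w bern_weight pi w * (u (choice_sum M m w))%:R.

Definition prob_vector pi := forall i, 0 <= pi i <= 1.

Definition upward_closed u := forall t t', u t -> t <= t' -> u t'.

Lemma bern_weight_ge0 pi w : prob_vector pi -> 0 <= bern_weight pi w.
Proof. by move=> pi01; apply: prodr_ge0 => i _; case: (w i); have := pi01 i; lra. Qed.

Lemma sum_bern_weight pi : \sum_w bern_weight pi w = 1.
Proof.
rewrite /bern_weight -(bigA_distr_bigA (fun i (b : bool) => if b then pi i else 1 - pi i)).
by rewrite big1 // => i _; rewrite big_bool /=; lra.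
Qed.

Lemma bern_prob_sub pi M m u1 u2 : prob_vector pi -> (forall t, u1 t -> u2 t) ->
  bern_prob pi M m u1 <= bern_prob pi M m u2.
Proof.
move=> pi01 u12; apply: ler_sum => w _; apply: ler_wpM2l; first exact: bern_weight_ge0.
by case E1: (u1 _); [rewrite u12 | case: (u2 _)].
Qed.

Lemma bern_probC pi M m u : bern_prob pi M m (fun t => ~~ u t) = 1 - bern_prob pi M m u.
Proof.
apply/eqP; rewrite eq_sym subr_eq -(sum_bern_weight pi) /bern_prob -big_split /=.
by apply/eqP/eq_bigr => w _; case: (u _); rewrite /= ?mulr0 ?mulr1 ?addr0 ?add0r.
Qed.

Lemma bern_prob_le1 pi M m u : prob_vector pi -> bern_prob pi M m u <= 1.
Proof.
move=> pi01; rewrite -(sum_bern_weight pi); apply: ler_sum => w _.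
by have := bern_weight_ge0 w pi01; case: (u _); rewrite /= ?mulr0 ?mulr1.
Qed.

Definition flip_at (i : T) w : {ffun T -> bool} :=
  [ffun l => if l == i then ~~ w l else w l].

Lemma flip_atK i : involutive (flip_at i).
Proof. by move=> w; apply/ffunP => l; rewrite !ffunE; case: eqP; rewrite ?negbK. Qed.

Definition bern_weight_off pi i w : R :=
  \prod_(l | l != i) (if w l then pi l else 1 - pi l).

Lemma bern_weightD1 pi i w :
  bern_weight pi w = (if w i then pi i else 1 - pi i) * bern_weight_off pi i w.
Proof. by rewrite /bern_weight (bigD1 i). Qed.

Lemma bern_weight_off_flip pi i w : bern_weight_off pi i (flip_at i w) = bern_weight_off pi i w.
Proof. by apply: eq_bigr => l /negbTE li; rewrite ffunE li. Qed.

Lemma eq_bern_weight_off pi pi' i w : (forall l, l != i -> pi l = pi' l) ->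
  bern_weight_off pi i w = bern_weight_off pi' i w.
Proof. by move=> eq_pi; apply: eq_bigr => l li; rewrite eq_pi. Qed.

Lemma choice_sum_flip M m i w : (forall l, m l <= M l) -> w i ->
  choice_sum M m (flip_at i w) <= choice_sum M m w.
Proof.
move=> mM wi; rewrite /choice_sum (bigD1 i) //= [X in _ <= X](bigD1 i) //= ffunE eqxx wi.
rewrite (eq_bigr (fun l => if w l then M l else m l)) ?lerD2r //.
by move=> l /negbTE li; rewrite ffunE li.
Qed.

(* Pairing [w] with [flip_at i w] couples the two laws coordinatewise. *)
Lemma bern_prob_mono_at pi pi' M m u i :
  (forall l, l != i -> pi l = pi' l) -> pi i <= pi' i -> prob_vector pi ->
  (forall l, m l <= M l) -> upward_closed u -> bern_prob pi M m u <= bern_prob pi' M m u.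
Proof.
move=> eq_pi le_pi pi01 mM u_up.
suff: bern_prob pi M m u *+ 2 <= bern_prob pi' M m u *+ 2 by rewrite ler_pMn2r.
have paired rho : bern_prob rho M m u *+ 2 =
  \sum_w (bern_weight rho w * (u (choice_sum M m w))%:R +
          bern_weight rho (flip_at i w) * (u (choice_sum M m (flip_at i w)))%:R).
  rewrite big_split mulr2n /=; congr (_ + _).
  by rewrite /bern_prob (reindex_inj (can_inj (flip_atK i))).
rewrite !paired; apply: ler_sum => w _.
rewrite !(bern_weightD1 _ i) !bern_weight_off_flip (eq_bern_weight_off w eq_pi) ffunE eqxx.
have r_ge0 : 0 <= bern_weight_off pi' i w.
  rewrite -(eq_bern_weight_off w eq_pi); apply: prodr_ge0 => l _.
  by case: (w l); have := pi01 l; lra.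
set r := bern_weight_off pi' i w.
have gap_ge0 : 0 <= (pi' i - pi i) * r by apply: mulr_ge0; rewrite ?subr_ge0.
set s := choice_sum M m w; set sf := choice_sum M m (flip_at i w).
case wi: (w i) => /=.
- have le_sf_s : sf <= s by exact: choice_sum_flip.
  case us: (u s); case usf: (u sf); rewrite /= ?mulr1n ?mulr0n ?mulr1 ?mulr0; try nra.
  by move: (u_up _ _ usf le_sf_s); rewrite us.
- have le_s_sf : s <= sf.
    rewrite /s -[w in choice_sum M m w](flip_atK i w).
    by apply: choice_sum_flip; rewrite /flip_at ?ffunE ?eqxx ?wi.
  case us: (u s); case usf: (u sf); rewrite /= ?mulr1n ?mulr0n ?mulr1 ?mulr0; try nra.
  by move: (u_up _ _ us le_s_sf); rewrite usf.
Qed.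

Lemma bern_prob_mono pi pi' M m u : prob_vector pi -> prob_vector pi' ->
  (forall i, pi i <= pi' i) -> (forall i, m i <= M i) -> upward_closed u ->
  bern_prob pi M m u <= bern_prob pi' M m u.
Proof.
move=> pi01 pi'01 le_pi mM u_up.
pose mix n x := if (enum_rank x < n)%N then pi' x else pi x.
have mix01 n : prob_vector (mix n) by move=> x; rewrite /mix; case: ifP.
have mixS n : bern_prob (mix n) M m u <= bern_prob (mix n.+1) M m u.
  case: (ltnP n #|T|) => [ltn|len]; last first.
    suff -> : mix n.+1 = mix n by [].
    by apply: funext => x; rewrite /mix !(leq_trans (ltn_ord _)) // leqW.
  pose i := enum_val (Ordinal ltn).
  have rank_i : enum_rank i = n :> nat by rewrite /i enum_valK.
  apply: (bern_prob_mono_at (i := i)) => //; rewrite /mix ?rank_i ?ltnn ?ltnSn //.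
  move=> x xi; have rank_x : enum_rank x != n :> nat.
    by apply: contra xi => /eqP rank_x; apply/eqP/enum_rank_inj/val_inj; rewrite /= rank_x.
  by rewrite [in RHS]ltnS [in RHS]leq_eqVlt (negbTE rank_x).
have mix_le n : bern_prob (mix 0) M m u <= bern_prob (mix n) M m u.
  by elim: n => // n IH; apply: le_trans IH (mixS n).
have -> : pi = mix 0 by apply: funext.
suff -> : pi' = mix #|T| by [].
by apply: funext => x; rewrite /mix ltn_ord.
Qed.

Definition prob_on (S : {set T}) (t : R) (i : T) : R := if i \in S then t else 1.

Lemma prob_on01 S t : 0 <= t <= 1 -> prob_vector (prob_on S t).
Proof. by move=> t01 i; rewrite /prob_on; case: (i \in S); rewrite ?ler01 ?lexx. Qed.

Lemma bern_prob_swap (S : {set T}) t i j M m u :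
  i \notin S -> j \in S -> M i - m i <= M j - m j -> 0 <= t <= 1 -> upward_closed u ->
  bern_prob (prob_on S t) M m u <= bern_prob (prob_on (i |: (S :\ j)) t) M m u.
Proof.
move=> iS jS le_gap t01 u_up.
have ij : i != j by apply: contraNneq iS => ->.
set S' := i |: (S :\ j).
pose sw w : {ffun T -> bool} := [ffun l => w (tperm i j l)].
have swK : involutive sw by move=> w; apply/ffunP => l; rewrite !ffunE tpermK.
rewrite /bern_prob (reindex_inj (can_inj swK)); apply: ler_sum => w _.
have -> : bern_weight (prob_on S t) (sw w) = bern_weight (prob_on S' t) w.
  rewrite /bern_weight (reindex_inj (@perm_inj _ (tperm i j))) /=.
  apply: eq_bigr => l _; rewrite ffunE tpermK /prob_on.
  suff -> : (tperm i j l \in S) = (l \in S') by [].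
  rewrite /S'; case: tpermP => [->|->|/eqP li /eqP lj]; rewrite !inE ?eqxx ?jS //=.
    by rewrite eq_sym (negbTE ij) /= (negbTE iS).
  by rewrite (negbTE li) lj.
case wj: (w j); last first.
  suff -> : bern_weight (prob_on S' t) w = 0 by rewrite !mul0r.
  rewrite /bern_weight (bigD1 j) //= wj /prob_on !inE eqxx eq_sym (negbTE ij) /=.
  by rewrite subrr mul0r.
apply: ler_wpM2l; first exact/bern_weight_ge0/prob_on01.
suff le_sum : choice_sum M m (sw w) <= choice_sum M m w.
  by case us: (u _); rewrite ?(u_up _ _ us le_sum) ?ler0n.
have sumD2 (f : T -> R) :
    \sum_l f l = f i + f j + \sum_(l | (l != i) && (l != j)) f l.
  by rewrite (bigD1 i) // (bigD1 j) 1?eq_sym //= addrA.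
rewrite /choice_sum !sumD2 !ffunE tpermL tpermR wj.
rewrite (eq_bigr (fun l => if w l then M l else m l)); last first.
  by move=> l /andP[li lj]; rewrite ffunE tpermD // eq_sym.
by rewrite lerD2r; case: (w i); lra.
Qed.

Lemma bern_prob_le_min_gap (S K : {set T}) t M m u : 0 <= t <= 1 -> upward_closed u ->
  (forall i j, i \in K -> j \notin K -> M i - m i <= M j - m j) -> #|S| = #|K| ->
  bern_prob (prob_on S t) M m u <= bern_prob (prob_on K t) M m u.
Proof.
move=> t01 u_up K_min_gap.
elim: {S}#|S :\: K|.+1 {-2}S (ltnSn #|S :\: K|) => // n IH S lt_SK cardS.
have [->//|neqSK] := eqVneq S K.
have [j jS jK] : exists2 j, j \in S & j \notin K.
  by apply/subsetPn; apply: contra neqSK => sSK; rewrite eqEcard sSK cardS leqnn.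
have [i iK iS] : exists2 i, i \in K & i \notin S.
  by apply/subsetPn; apply: contra neqSK => sKS; rewrite eq_sym eqEcard sKS cardS leqnn.
apply: le_trans (bern_prob_swap iS jS (K_min_gap _ _ iK jK) t01 u_up) (IH _ _ _).
- have -> : (i |: (S :\ j)) :\: K = (S :\: K) :\ j.
    apply/setP => x; rewrite !inE.
    by case: (eqVneq x i) => [->|_]; rewrite ?iK ?andbF //= andbCA.
  by move: lt_SK; rewrite (cardsD1 j (S :\: K)) !inE jS jK.
- by rewrite cardsU1 !inE (negbTE iS) andbF -cardS (cardsD1 j S) jS.
Qed.

(* Validity of a tail p-value: the event [u] is contained in the tail
   [t0 <= X], where [t0] is the smallest value of the sum satisfying [u]. *)
Lemma bern_prob_le_tail_bound pi M m u alpha : prob_vector pi -> 0 <= alpha ->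
  (forall t, u t -> bern_prob pi M m (fun s => t <= s) <= alpha) ->
  bern_prob pi M m u <= alpha.
Proof.
move=> pi01 alpha_ge0 tail_le.
have [[w0 uw0]|no_u] := pselect (exists w, u (choice_sum M m w)); last first.
  rewrite /bern_prob big1 // => w _.
  by case uw: (u _); rewrite ?mulr0 //; case: no_u; exists w.
have [w1 uw1 w1_min] := @arg_minP _ _ _ w0 (fun w => u (choice_sum M m w)) (choice_sum M m) uw0.
apply: le_trans (tail_le _ uw1); apply: ler_sum => w _.
apply: ler_wpM2l; first exact: bern_weight_ge0.
by case uw: (u _); rewrite ?ler0n ?(w1_min w uw).
Qed.

End BernoulliChoiceSums.

Section MatchedPairs.
Variables (R : realType) (I : nat).
Implicit Types (p q : 'I_I -> 'I_2 -> R) (sigma : {perm 'I_I}).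

Definition arg_max2 q i : 'I_2 := if q i 0 <= q i 1 then 1 else 0.
Definition arg_min2 q i : 'I_2 := if q i 0 <= q i 1 then 0 else 1.
Definition qmax q i := Num.max (q i 0) (q i 1).
Definition qmin q i := Num.min (q i 0) (q i 1).

Definition pmax p q i := p i (arg_max2 q i).

Lemma qmin_le_qmax q i : qmin q i <= qmax q i.
Proof. by rewrite /qmin /qmax; case: (leP (q i 0) (q i 1)) => [//|/ltW]. Qed.

Lemma qmax_sub_qmin q i : qmax q i - qmin q i = `|q i 0 - q i 1|.
Proof.
rewrite /qmax /qmin maxEle minEle; case: leP => [le01|lt10].
  by rewrite distrC ger0_norm // subr_ge0.
by rewrite ger0_norm // subr_ge0 ltW.
Qed.

Definition assignment_of q (w : {ffun 'I_I -> bool}) : assignment I :=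
  [ffun i => if w i then arg_max2 q i else arg_min2 q i].

Lemma assignment_of_bij q : bijective (assignment_of q).
Proof.
exists (fun z : assignment I => [ffun i => z i == arg_max2 q i]) => [w|z].
  by apply/ffunP => i; rewrite !ffunE; case: (w i); rewrite /arg_max2 /arg_min2; case: ifP.
apply/ffunP => i; rewrite !ffunE.
case: eqP => [->//|]; rewrite /arg_max2 /arg_min2.
by case: ifP => _; case: (z i) => -[|[|//]] lt neq; apply/val_inj => //;
  case: neq; apply/val_inj.
Qed.

Lemma Tstat_assignment_of q w : Tstat q (assignment_of q w) = choice_sum (qmax q) (qmin q) w.
Proof.
apply: eq_bigr => i _; rewrite (bigD1 (assignment_of q w i)) //= eqxx mul1r.
rewrite big1 => [|j /negbTE]; last by rewrite eq_sym => ->; rewrite mul0r.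
by rewrite addr0 ffunE /qmax /qmin maxEle minEle /arg_max2 /arg_min2; case: (w i); case: ifP.
Qed.

Lemma probZ_assignment_of p q w : (forall i, p i 0 + p i 1 = 1) ->
  probZ p (assignment_of q w) = bern_weight (pmax p q) w.
Proof.
move=> p_sum1; apply: eq_bigr => i _; rewrite ffunE /pmax.
by case: (w i) => //; have := p_sum1 i; rewrite /arg_max2 /arg_min2; case: ifP => _; lra.
Qed.

Lemma Pr_Tstat p q (E : R -> bool) : (forall i, p i 0 + p i 1 = 1) ->
  Pr p (fun z => E (Tstat q z)) = bern_prob (pmax p q) (qmax q) (qmin q) E.
Proof.
move=> p_sum1; rewrite /Pr big_mkcond /= (reindex (assignment_of q)); last first.
  exact/onW_bij/assignment_of_bij.
apply: eq_bigr => w _; rewrite Tstat_assignment_of probZ_assignment_of //.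
by case: (E _); rewrite ?mulr1 ?mulr0.
Qed.

Lemma Pr_sub p (E1 E2 : pred (assignment I)) : (forall i j, 0 <= p i j) ->
  (forall z, E1 z -> E2 z) -> Pr p E1 <= Pr p E2.
Proof.
move=> p_ge0 E12; rewrite /Pr [X in X <= _]big_mkcond [X in _ <= X]big_mkcond.
apply: ler_sum => z _; case E1z: (E1 z); first by rewrite E12.
by case: (E2 z) => //; apply: prodr_ge0.
Qed.

Lemma Pr_predT p : (forall i, p i 0 + p i 1 = 1) -> Pr p predT = 1.
Proof.
move=> p_sum1; rewrite (Pr_Tstat (fun _ _ => 0) (fun _ => true) p_sum1).
rewrite -[RHS](sum_bern_weight (pmax p (fun _ _ => 0))).
by apply: eq_bigr => w _; rewrite mulr1.
Qed.


Lemma theta_in01 (g : \bar R) : (1 <= g)%E -> 0 <= theta g <= 1.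
Proof.
case: g => [r| |] //= r_ge1; last by rewrite ler01 lexx.
rewrite lee_fin in r_ge1; have r1_gt0 : 0 < 1 + r by lra.
by rewrite divr_ge0 ?ler_pdivrMr //=; lra.
Qed.

Lemma theta_le (g g' : \bar R) : (1 <= g)%E -> (g <= g')%E -> theta g <= theta g'.
Proof.
move=> g_ge1 le_gg'; have /andP[_ theta_le1] := theta_in01 g_ge1.
move: g_ge1 le_gg' theta_le1; case: g => [r| |] //; case: g' => [r'| |] //=.
rewrite !lee_fin => r_ge1 le_rr' _; have r1_gt0 : 0 < 1 + r by lra.
by rewrite ler_pdivrMr // mulrAC ler_pdivlMr //; nra.
Qed.

Lemma gamma_star_ge1 p i : (forall i j, 0 <= p i j) -> (1 <= gamma_star p i)%E.
Proof.
move=> p_ge0; rewrite /gamma_star; case: eqP => [_|/eqP mn_neq0]; first exact: leey.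
have mn_gt0 : 0 < Num.min (p i 0) (p i 1) by rewrite lt_def mn_neq0 le_min !p_ge0.
rewrite lee_fin ler_pdivlMr // mul1r.
by case: (leP (p i 0) (p i 1)) => [//|/ltW].
Qed.

Lemma pmax_in01 p q : (forall i j, 0 <= p i j) -> (forall i, p i 0 + p i 1 = 1) ->
  prob_vector (pmax p q).
Proof.
move=> p_ge0 p_sum1 i; have := p_sum1 i; have := p_ge0 i 0; have := p_ge0 i 1.
by rewrite /pmax /arg_max2; case: ifP => _ *; apply/andP; split; lra.
Qed.

(* If [max/min <= r] and [max + min = 1], then [max <= r/(1+r)]. *)
Lemma pmax_le_theta p q i (g : \bar R) : (forall i j, 0 <= p i j) ->
  (forall i, p i 0 + p i 1 = 1) -> (1 <= g)%E -> (gamma_star p i <= g)%E ->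
  pmax p q i <= theta g.
Proof.
move=> p_ge0 p_sum1 g_ge1; rewrite /gamma_star /= => gamma_le.
set mx := Num.max (p i 0) (p i 1) in gamma_le *.
set mn := Num.min (p i 0) (p i 1) in gamma_le *.
have le_pmax : pmax p q i <= mx.
  by rewrite /pmax /arg_max2 le_max; case: ifP => _; rewrite lexx ?orbT.
have sum_mn_mx : mn + mx = 1 by rewrite addr_min_max p_sum1.
have mn_ge0 : 0 <= mn by rewrite le_min !p_ge0.
apply: le_trans le_pmax _; move: g_ge1 gamma_le; case: g => [r| |] //=; last by lra.
rewrite lee_fin => r_ge1; case: eqP => // /eqP mn_neq0.
have mn_gt0 : 0 < mn by rewrite lt_def mn_neq0.
rewrite lee_fin ler_pdivrMr // => le_mx.
by rewrite ler_pdivlMr; nra.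
Qed.

Lemma pbar_bern_prob q sigma (g : \bar R) k c : k != 0%N ->
  pbar q sigma g k c = bern_prob (prob_on (Ik sigma k) (theta g)) (qmax q) (qmin q) (<=%R c).
Proof.
move=> k_neq0; rewrite /pbar (negbTE k_neq0); apply: eq_bigr => w _; congr (_ * _).
  apply: eq_bigr => i _; rewrite /prob_on.
  by case: (i \in Ik sigma k); case: (w i); rewrite ?subrr.
by case: ifP.
Qed.

Lemma mem_Ik sigma k i : (i \in Ik sigma k) = ((sigma^-1)%g i < k)%N.
Proof.
apply/imsetP/idP => [[a a_lt ->]|lt_k]; first by rewrite permK; rewrite inE in a_lt.
by exists ((sigma^-1)%g i); rewrite ?inE ?permKV.
Qed.

Lemma card_Ik sigma k : (k <= I)%N -> #|Ik sigma k| = k.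
Proof.
move=> le_kI; rewrite card_imset; last exact: perm_inj.
rewrite -sum1dep_card -(big_ord_widen _ (fun _ => 1%N) le_kI).
by rewrite sum1_card card_ord.
Qed.

Lemma Ik_min_gap q sigma k : (forall a b : 'I_I, (a <= b)%N ->
       `|q (sigma a) 0 - q (sigma a) 1| <= `|q (sigma b) 0 - q (sigma b) 1|) ->
  forall i j, i \in Ik sigma k -> j \notin Ik sigma k ->
  qmax q i - qmin q i <= qmax q j - qmin q j.
Proof.
move=> sigma_sorted i j; rewrite !mem_Ik !qmax_sub_qmin => ik jk.
rewrite -(permKV sigma i) -(permKV sigma j); apply: sigma_sorted; lia.
Qed.

Lemma I_star_add_card p (g : \bar R) :
  (I_star p g + #|[set i | (gamma_star p i <= g)%E]|)%N = I.
Proof.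
rewrite -[RHS]card_ord -(cardsC [set i | (gamma_star p i <= g)%E]) addnC.
by congr (_ + _)%N; apply: eq_card => i; rewrite !inE ltNge.
Qed.

Lemma pval_coverage p q sigma (g : \bar R) k alpha :
  (forall i j, 0 <= p i j) -> (forall i, p i 0 + p i 1 = 1) ->
  (forall a b : 'I_I, (a <= b)%N ->
       `|q (sigma a) 0 - q (sigma a) 1| <= `|q (sigma b) 0 - q (sigma b) 1|) ->
  (1 <= g)%E -> (1 <= k <= I)%N -> 0 <= alpha -> (I_star p g <= I - k)%N ->
  1 - alpha <= Pr p (fun z => alpha < Defs.pval q sigma g k z).
Proof.
move=> p_ge0 p_sum1 sigma_sorted g_ge1 /andP[k_gt0 le_kI] alpha_ge0 le_Istar.
have theta01 := theta_in01 g_ge1.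
set pbar_k := prob_on (Ik sigma k) (theta g).
pose tail t := bern_prob pbar_k (qmax q) (qmin q) (<=%R t).
have -> : Pr p (fun z => alpha < Defs.pval q sigma g k z) =
          bern_prob (pmax p q) (qmax q) (qmin q) (fun t => ~~ (tail t <= alpha)).
  rewrite -Pr_Tstat //; apply: eq_bigl => z.
  by rewrite /Defs.pval pbar_bern_prob -?lt0n // ltNge.
rewrite bern_probC lerD2l lerN2.
have tail_up : upward_closed (fun t => tail t <= alpha).
  move=> t t' tail_t le_tt'; apply: le_trans tail_t; apply: bern_prob_sub => [|s].
    exact: prob_on01.
  exact: le_trans.
set S := [set i | (gamma_star p i <= g)%E].
have : (k <= #|S|)%N by have := I_star_add_card p g; rewrite -/S; lia.
case/card_geqP => s [s_uniq s_size sS].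
have card_s : #|[set i in s]| = #|Ik sigma k|.
  by rewrite card_Ik // cardsE (card_uniqP s_uniq).
apply: le_trans (bern_prob_mono (pi' := prob_on [set i in s] (theta g)) _ _ _
  (@qmin_le_qmax q) tail_up) _.
- exact: pmax_in01.
- exact: prob_on01.
- move=> i; rewrite /prob_on inE; case: ifP => [/sS|_].
    by rewrite inE; apply: pmax_le_theta.
  by case/andP: (pmax_in01 q p_ge0 p_sum1 i).
apply: le_trans (bern_prob_le_min_gap theta01 tail_up (Ik_min_gap sigma_sorted) card_s) _.
by apply: bern_prob_le_tail_bound => //; exact: prob_on01.
Qed.

Lemma kth_smallest_ge1 p k : (forall i j, 0 <= p i j) -> (1 <= k <= I)%N ->
  (1 <= kth_smallest (gamma_star p) k)%E.
Proof.
move=> p_ge0 /andP[k_gt0 le_kI].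
have : kth_smallest (gamma_star p) k \in [seq gamma_star p i | i <- enum 'I_I].
  by rewrite -(mem_sort <=%O) mem_nth // size_sort size_map size_enum_ord; lia.
by case/mapP => i _ ->; exact: gamma_star_ge1.
Qed.

Lemma I_star_kth_smallest p k : (1 <= k <= I)%N ->
  (I_star p (kth_smallest (gamma_star p) k) <= I - k)%N.
Proof.
move=> /andP[k_gt0 le_kI]; rewrite /kth_smallest.
set s := sort _ _; set g := nth _ s _.
have size_s : size s = I by rewrite size_sort size_map size_enum_ord.
suff : (k <= #|[set i | (gamma_star p i <= g)%E]|)%N by have := I_star_add_card p g; lia.
rewrite cardsE cardE size_filter -(count_map _ (fun x => (x <= g)%E)) -enumT.
have -> : count (fun x => (x <= g)%E) [seq gamma_star p i | i <- enum 'I_I] =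
          count (fun x => (x <= g)%E) s by apply/esym/seq.permP; rewrite perm_sort.
rewrite -(cat_take_drop k s) count_cat.
have /[!all_count]/eqP -> : all (fun x => (x <= g)%E) (take k s).
  apply/(all_nthP +oo%E) => j; rewrite size_takel ?size_s // => lt_jk.
  rewrite nth_take //; apply: (le_sorted_leq_nth +oo%E (sort_sorted le_total _));
    rewrite ?inE ?size_s; lia.
by rewrite size_takel ?size_s ?leq_addr.
Qed.

Lemma pval_le_k q sigma (g : \bar R) z k k' : (1 <= g)%E -> (k' <= k)%N ->
  Defs.pval q sigma g k z <= Defs.pval q sigma g k' z.
Proof.
move=> g_ge1 le_k'k; have theta01 := theta_in01 g_ge1.
rewrite /Defs.pval; have [->|k'_gt0] := posnP k'.
  rewrite [X in _ <= X]/pbar eqxx; have [->|k_gt0] := posnP k; first by rewrite /pbar.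
  by rewrite pbar_bern_prob -?lt0n // bern_prob_le1 //; apply: prob_on01.
have k_gt0 : (0 < k)%N by apply: leq_trans le_k'k.
rewrite !pbar_bern_prob -?lt0n //; apply: bern_prob_mono.
- exact: prob_on01.
- exact: prob_on01.
- move=> i; rewrite /prob_on !mem_Ik.
  by case: ifP => ?; case: ifP => ? //; [case/andP: theta01 | lia].
- exact: qmin_le_qmax.
- by move=> t t'; apply: le_trans.
Qed.

Lemma pval_le_gamma q sigma (g g' : \bar R) z k : (1 <= g)%E -> (g <= g')%E ->
  Defs.pval q sigma g k z <= Defs.pval q sigma g' k z.
Proof.
move=> g_ge1 le_gg'; have g'_ge1 := le_trans g_ge1 le_gg'.
rewrite /Defs.pval; have [->|k_gt0] := posnP k; first by rewrite /pbar eqxx.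
rewrite !pbar_bern_prob -?lt0n //; apply: bern_prob_mono.
- exact/prob_on01/theta_in01.
- exact/prob_on01/theta_in01.
- by move=> i; rewrite /prob_on; case: ifP => // _; apply: theta_le.
- exact: qmin_le_qmax.
- by move=> t t'; apply: le_trans.
Qed.

End MatchedPairs.

Local Open Scope classical_set_scope.

Lemma upward_closed_ereal_ray (R : realType) (A : set (\bar R)) :
  (forall a b, A a -> (a <= b)%E -> A b) ->
  A = [set g | (ereal_inf A < g)%E] \/ A = [set g | (ereal_inf A <= g)%E].
Proof.
move=> A_up; have [Ainf|notAinf] := pselect (A (ereal_inf A)); [right|left];
  apply: funext => g; apply: propext; split => /=.
- by move=> Ag; apply: ereal_inf_lbound.
- by move=> le_inf_g; apply: A_up Ainf le_inf_g.
- move=> Ag; rewrite lt_neqAle ereal_inf_lbound // andbT.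
  by apply: contraPneq notAinf => ->.
- by case/ereal_inf_lt => a Aa lt_ag; apply: A_up Aa (ltW lt_ag).
Qed.

Section Corollary3.
Variables (R : realType) (I : nat) (p q : 'I_I -> 'I_2 -> R) (sigma : {perm 'I_I}).
Hypotheses (p_ge0 : forall i j, 0 <= p i j) (p_sum1 : forall i, p i 0 + p i 1 = 1)
  (sigma_sorted : forall a b : 'I_I, (a <= b)%N ->
       `|q (sigma a) 0 - q (sigma a) 1| <= `|q (sigma b) 0 - q (sigma b) 1|).

Lemma CS_gamma_coverage k alpha : (1 <= k <= I)%N -> 0 <= alpha ->
  1 - alpha <=
  Pr p (fun z => `[< CS_gamma q sigma k alpha z (kth_smallest (gamma_star p) k) >]).
Proof.
move=> k_range alpha_ge0; have g_ge1 := kth_smallest_ge1 p_ge0 k_range.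
apply: le_trans (pval_coverage p_ge0 p_sum1 sigma_sorted g_ge1 k_range alpha_ge0
  (I_star_kth_smallest p k_range)) _.
by apply: Pr_sub => // z pval_gt; apply/asboolP.
Qed.

Lemma CS_gamma_ray k alpha z :
  CS_gamma q sigma k alpha z = [set g | (Gamma_hat q sigma k alpha z < g)%E] \/
  CS_gamma q sigma k alpha z = [set g | (Gamma_hat q sigma k alpha z <= g)%E].
Proof.
apply: upward_closed_ereal_ray => a b [a_ge1 pval_gt] le_ab.
split; first exact: le_trans le_ab.
by apply: lt_le_trans pval_gt _; apply: pval_le_gamma.
Qed.

Lemma CS_I_coverage (g : \bar R) alpha : (1 <= g)%E -> 0 <= alpha < 1 ->
  1 - alpha <= Pr p (fun z => CS_I q sigma g alpha z (I_star p g)).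
Proof.
move=> g_ge1 /andP[alpha_ge0 alpha_lt1].
have le_Istar : (I_star p g <= I)%N by have := I_star_add_card p g; lia.
have CS_I_Istar z : alpha < Defs.pval q sigma g (I - I_star p g) z ->
    CS_I q sigma g alpha z (I_star p g).
  move=> pval_gt; apply/existsP; exists (inord (I - I_star p g)).
  by rewrite inordK ?ltnS ?leq_subr // pval_gt (subKn le_Istar) eqxx.
have [k_eq0|k_gt0] := posnP (I - I_star p g).
  apply: (@le_trans _ _ 1); first by rewrite lerBlDr lerDl.
  rewrite -(Pr_predT p_sum1); apply: Pr_sub => // z _; apply: CS_I_Istar.
  by rewrite k_eq0 /Defs.pval /pbar eqxx.
apply: le_trans (pval_coverage (k := I - I_star p g) p_ge0 p_sum1 sigma_sorted g_ge1 _
  alpha_ge0 _) _; rewrite ?k_gt0 ?leq_subr ?subKn //.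
exact: Pr_sub.
Qed.

Lemma CS_I_range (g : \bar R) alpha z n : (1 <= g)%E -> alpha < 1 ->
  CS_I q sigma g alpha z n = (I_hat q sigma g alpha z <= n <= I)%N.
Proof.
move=> g_ge1 alpha_lt1; pose P := [pred k : 'I_I.+1 | alpha < Defs.pval q sigma g k z].
have [|kmax P_kmax max_eq] := @eq_bigmax_cond _ P (@nat_of_ord I.+1).
  by apply/card_gt0P; exists ord0; rewrite inE /Defs.pval /pbar eqxx.
have le_kmax k : P k -> (k <= kmax)%N by move=> Pk; rewrite -max_eq; apply: leq_bigmax_cond.
rewrite /I_hat max_eq /CS_I.
apply/existsP/andP => [[k /andP[Pk /eqP ->]] | [le_n le_nI]].
  by rewrite leq_subr leq_sub2l // le_kmax.
exists (inord (I - n)); rewrite inordK ?ltnS ?leq_subr // subKn // eqxx andbT.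
apply: lt_le_trans P_kmax _; apply: pval_le_k => //; lia.
Qed.

End Corollary3.

Theorem corollary3 (R : realType) (I : nat) (p q : 'I_I -> 'I_2 -> R)
    (sigma : {perm 'I_I})
    (p_ge0 : forall i j, 0 <= p i j)
    (p_sum1 : forall i, p i 0 + p i 1 = 1)
    (sigma_sorted : forall a b : 'I_I, (a <= b)%N ->
       `|q (sigma a) 0 - q (sigma a) 1| <= `|q (sigma b) 0 - q (sigma b) 1|) :
  (forall (k : nat) (alpha : R), (1 <= k <= I)%N -> 0 < alpha < 1 ->
     1 - alpha <= Pr p (fun z => `[< CS_gamma q sigma k alpha z
                                     (kth_smallest (gamma_star p) k) >])
     /\ (forall z : assignment I,
           CS_gamma q sigma k alpha z = [set g | (Gamma_hat q sigma k alpha z < g)%E]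
        \/ CS_gamma q sigma k alpha z = [set g | (Gamma_hat q sigma k alpha z <= g)%E]))
  /\
  (forall (Gamma0 : \bar R) (alpha : R), (1 <= Gamma0)%E -> 0 < alpha < 1 ->
     1 - alpha <= Pr p (fun z => CS_I q sigma Gamma0 alpha z (I_star p Gamma0))
     /\ (forall (z : assignment I) (n : nat),
           CS_I q sigma Gamma0 alpha z n = (I_hat q sigma Gamma0 alpha z <= n <= I)%N)).
Proof.
split=> [k alpha k_range /andP[alpha_gt0 _] | g alpha g_ge1 /andP[alpha_gt0 alpha_lt1]].
  split; first exact: (CS_gamma_coverage p_ge0 p_sum1 sigma_sorted k_range (ltW alpha_gt0)).
  by move=> z; apply: CS_gamma_ray.
split; first by apply: CS_I_coverage => //; rewrite (ltW alpha_gt0).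
by move=> z n; apply: CS_I_range.
Qed.
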